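(* Let $n\ge 6$. All vertices $[\tau]$ of $\widetilde P_0(S_n)$ with $\tau$ a transposition lie in the same connected component $\widetilde\Delta_n$ of $\widetilde P_0(S_n)$, and $\widetilde\Delta_n$ contains vertices of each of the types $[1^{n-2},2]$, $[1^{n-5},2,3]$ and $[1^{n-3},3]$.
   Context: $\widetilde P_0(S_n)$: vertex set $\{[x]:x\in S_n\setminus\{\mathrm{id}\}\}$ with $[x]=\{y:\langle y\rangle=\langle x\rangle\}$, distinct $[x],[y]$ adjacent iff some representatives are one a positive power of the other. The type of $[\psi]$ is the partition of $n$ given by the orbit lengths of $\langle\psi\rangle$ on $\{1,\dots,n\}$, written with exponents denoting multiplicities. *)

From mathcomp Require Import all_boot all_order all_fingroup.
From Stdlib Require Import Relations.
Set Implicit Arguments. Unset Strict Implicit. Unset Printing Implicit Defensive.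
Local Open Scope group_scope.

Definition cls (n : nat) (x : 'S_n) : {set 'S_n} := [set y | <[y]> == <[x]>].

Definition vertex (n : nat) (V : {set 'S_n}) : Prop :=
  exists2 x : 'S_n, x != 1 & V = cls x.

Definition adj (n : nat) (V W : {set 'S_n}) : Prop :=
  [/\ vertex V, vertex W, V <> W &
      exists x y : 'S_n, [/\ x \in V, y \in W &
        exists k : nat, (0 < k)%N /\ (x = y ^+ k \/ y = x ^+ k)]].

Definition connected (n : nat) (V W : {set 'S_n}) : Prop :=
  clos_refl_trans _ (@adj n) V W.

Definition cycle_type (n : nat) (psi : 'S_n) : seq nat :=
  map (fun X : {set 'I_n} => #|X|) (enum (porbits psi)).

Definition has_type (n : nat) (psi : 'S_n) (t : seq nat) : bool :=
  perm_eq (cycle_type psi) t.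

Definition transposition (n : nat) (t : 'S_n) : Prop :=
  exists i j : 'I_n, i != j /\ t = tperm i j.

From mathcomp Require Import all_boot all_order all_fingroup.
From Stdlib Require Import Relations.
Set Implicit Arguments. Unset Strict Implicit. Unset Printing Implicit Defensive.
Local Open Scope group_scope.

(* If a transposition t and a 3-cycle c have disjoint supports, they commute,
   so x = t c satisfies x^3 = t and x^4 = c; hence [t] - [x] - [c] is a path
   in the graph, and x has type [1^(n-5), 2, 3].  For n >= 6, two
   transpositions (a b), (a c) sharing a point leave three points free for a
   3-cycle disjoint from both, which joins them; two arbitrary transpositions
   are then joined through one sharing a point with each. *)

Section Order23.
Variables (gT : finGroupType) (t c : gT).
Hypotheses (tc : commute t c) (t2 : t ^+ 2 = 1) (c3 : c ^+ 3 = 1).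

Lemma expg3_mul23 : (t * c) ^+ 3 = t.
Proof. by rewrite expgMn // c3 mulg1 expgS t2 mulg1. Qed.

Lemma expg4_mul23 : (t * c) ^+ 4 = c.
Proof. by rewrite expgMn // (expgM t 2 2) t2 expg1n mul1g expgSr c3 mul1g. Qed.

End Order23.

Lemma expg_eq1_cycle (gT : finGroupType) (x y : gT) m :
  y \in <[x]> -> x ^+ m = 1 -> y ^+ m = 1.
Proof. by case/cycleP=> i -> xm1; rewrite -expgM mulnC expgM xm1 expg1n. Qed.

Section PowerGraph.
Variable n : nat.
Implicit Types (x : 'S_n) (V W : {set 'S_n}).

Lemma mem_cls x : x \in cls x.
Proof. by rewrite inE. Qed.

Lemma cls_eq_cycle x y : cls x = cls y -> <[x]> = <[y]>.
Proof. by move=> exy; have := mem_cls x; rewrite exy inE => /eqP. Qed.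

Lemma adj_sym V W : adj V W -> adj W V.
Proof.
case=> vV vW VW [x [y [xV yW [k [k0 xy]]]]]; split=> //; first by move/esym.
by exists y, x; split=> //; exists k; split=> //; case: xy; [right | left].
Qed.

Lemma connected_sym V W : connected V W -> connected W V.
Proof.
elim=> [? ? /adj_sym | ? | ? ? ? _ IH1 _ IH2]; [exact: rt_step | exact: rt_refl |].
exact: rt_trans IH2 IH1.
Qed.

Lemma adj_cls_expg x k : (0 < k)%N -> x ^+ k != 1 -> <[x ^+ k]> != <[x]> ->
  adj (cls (x ^+ k)) (cls x).
Proof.
move=> k0 xk1 xkx; have x1 : x != 1 by apply: contraNneq xk1 => ->; rewrite expg1n.
split; [by exists (x ^+ k) | by exists x | by move/cls_eq_cycle/eqP; apply/negP |].
by exists (x ^+ k), x; split; rewrite ?mem_cls //; exists k; split=> //; left.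
Qed.

Section Mul23.
Variables (t c : 'S_n).
Hypotheses (tc : commute t c) (t2 : t ^+ 2 = 1) (c3 : c ^+ 3 = 1).
Hypotheses (t1 : t != 1) (c1 : c != 1).

Let tc3 : (t * c) ^+ 3 = t := expg3_mul23 tc t2 c3.
Let tc4 : (t * c) ^+ 4 = c := expg4_mul23 tc t2 c3.

Lemma adj_cls_mul23_l : adj (cls t) (cls (t * c)).
Proof.
rewrite -{1}tc3; apply: adj_cls_expg; rewrite ?tc3 //.
apply: contraNneq c1 => t_tc.
have c_in_t : c \in <[t]> by rewrite t_tc -{1}tc4 mem_cycle.
by move: c3; rewrite expgSr (expg_eq1_cycle c_in_t t2) mul1g => ->.
Qed.

Lemma adj_cls_mul23_r : adj (cls c) (cls (t * c)).
Proof.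
rewrite -{1}tc4; apply: adj_cls_expg; rewrite ?tc4 //.
apply: contraNneq t1 => c_tc.
have t_in_c : t \in <[c]> by rewrite c_tc -{1}tc3 mem_cycle.
by move: (expg_eq1_cycle t_in_c c3); rewrite expgSr t2 mul1g => ->.
Qed.

Lemma connected_cls_mul23 : connected (cls t) (cls c).
Proof.
apply: rt_trans (rt_step _ _ _ _ adj_cls_mul23_l) _.
exact/rt_step/adj_sym/adj_cls_mul23_r.
Qed.

End Mul23.
End PowerGraph.

Lemma uniq3 (T : eqType) (x y z : T) :
  uniq [:: x; y; z] = [&& x != y, x != z & y != z].
Proof. by rewrite /= !inE negb_or andbT andbA. Qed.

Lemma cards3 (T : finType) (x y z : T) :
  uniq [:: x; y; z] -> #|[set x; y; z]| = 3.
Proof. by move/card_uniqP => /= <-; apply: eq_card => w; rewrite !inE orbA. Qed.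

Lemma exists_uniq_notin (T : finType) (X : {set T}) k : (#|X| + k <= #|T|)%N ->
  exists s : seq T, [/\ size s = k, uniq s & [disjoint X & s]].
Proof.
move=> Xk; exists (take k (enum (~: X))); split.
- by rewrite size_takel // -cardE cardsCs setCK leq_subRL ?max_card.
- exact/take_uniq/enum_uniq.
- by apply/pred0P=> x /=; apply/negbTE/andP=> -[xX /mem_take]; rewrite mem_enum inE xX.
Qed.

Section Orbits.
Variables (T : finType) (s : {perm T}).

Lemma porbit_next x : porbit s (s x) = porbit s x.
Proof. by have := porbit_perm s 1 x; rewrite expg1. Qed.

Lemma porbit_sub x (A : {set T}) :
  x \in A -> {homo s : y / y \in A} -> porbit s x \subset A.
Proof.
move=> xA sA; apply/subsetP=> _ /porbitP[i ->]; rewrite permX.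
by elim: i => //= i /sA.
Qed.

Lemma card_porbit_fix x : s x = x -> #|porbit s x| = 1%N.
Proof.
move=> sx; apply/eqP; rewrite eqn_leq lt0n card_porbit_neq0 andbT -(cards1 x).
by apply/subset_leq_card/porbit_sub; rewrite ?inE // => y /set1P ->; rewrite sx inE.
Qed.

Lemma card_porbit2 x y : x != y -> s x = y -> s y = x ->
  {in [set x; y], forall w, #|porbit s w| = 2}.
Proof.
move=> xy sx sy; have Px : porbit s x = [set x; y].
  apply/eqP; rewrite eqEsubset porbit_sub ?set21 //=.
    by apply/subsetP=> w /set2P[]->; rewrite -?eq_porbit_mem -?sx ?porbit_next.
  by move=> w /set2P[]->; rewrite ?sx ?sy !inE eqxx ?orbT.
by move=> w /set2P[]->; rewrite -?sx ?porbit_next Px cards2 xy.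
Qed.

Lemma card_porbit3 x y z : uniq [:: x; y; z] -> s x = y -> s y = z -> s z = x ->
  {in [set x; y; z], forall w, #|porbit s w| = 3}.
Proof.
move=> xyz sx sy sz; have Px : porbit s x = [set x; y; z].
  apply/eqP; rewrite eqEsubset porbit_sub ?inE ?eqxx //=.
    by apply/subsetP=> w; rewrite !inE -orbA => /or3P[]/eqP->;
      rewrite -?eq_porbit_mem -?sy -?sx ?porbit_next.
  by move=> w; rewrite !inE -orbA => /or3P[]/eqP->; rewrite ?sx ?sy ?sz eqxx ?orbT.
by move=> w; rewrite !inE -orbA => /or3P[]/eqP->; rewrite -?sy -?sx ?porbit_next Px cards3.
Qed.

End Orbits.

Lemma tperm_neq1 (T : finType) (x y : T) : x != y -> tperm x y != 1.
Proof. by apply: contraNneq => /permP/(_ x); rewrite tpermL perm1 => ->. Qed.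

Lemma tperm_expg2 (T : finType) (x y : T) : tperm x y ^+ 2 = 1.
Proof. by rewrite expgS expg1 tperm2. Qed.

Lemma commute_tperm (T : finType) (x y : T) (s : {perm T}) :
  s x = x -> s y = y -> commute (tperm x y) s.
Proof. by move=> sx sy; apply/commgP/conjg_fixP; rewrite tpermJ sx sy. Qed.

Definition cyc3 (T : finType) (x y z : T) : {perm T} := tperm x z * tperm z y.

Section Cycle3.
Variables (T : finType) (x y z : T).
Hypothesis xyz : uniq [:: x; y; z].

Lemma cyc3_x : cyc3 x y z x = y.
Proof. by rewrite permM tpermL tpermL. Qed.

Lemma cyc3_y : cyc3 x y z y = z.
Proof.
move: xyz; rewrite uniq3 permM => /and3P[xy _ yz].
by rewrite [tperm x z y]tpermD ?tpermR // eq_sym.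
Qed.

Lemma cyc3_z : cyc3 x y z z = x.
Proof.
by move: xyz; rewrite uniq3 permM => /and3P[xy xz _]; rewrite tpermR tpermD // eq_sym.
Qed.

Lemma cyc3_fix w : w \notin [:: x; y; z] -> cyc3 x y z w = w.
Proof.
by rewrite !inE !negb_or => /and3P[wx wy wz]; rewrite permM !tpermD // eq_sym.
Qed.

Lemma cyc3_neq1 : cyc3 x y z != 1.
Proof. by apply: contraTneq xyz => c1; rewrite uniq3 -{1}cyc3_x c1 perm1 eqxx. Qed.

Lemma cyc3_expg3 : cyc3 x y z ^+ 3 = 1.
Proof.
apply/permP=> w; rewrite permX perm1 /=.
case: (boolP (w \in [:: x; y; z])) => [|w_out]; last by rewrite !cyc3_fix.
by rewrite !inE => /or3P[]/eqP->; rewrite ?(cyc3_x, cyc3_y, cyc3_z).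
Qed.

End Cycle3.

Section CycleType.
Variable n : nat.
Implicit Types (s : 'S_n).

Lemma cycle_type_neq0 s : 0%N \notin cycle_type s.
Proof.
apply/mapP=> -[X]; rewrite mem_enum => /imsetP[y _ ->] /esym/eqP.
exact/negP/card_porbit_neq0.
Qed.

Lemma count_cycle_type s k :
  (count_mem k (cycle_type s) * k)%N = #|[set z | #|porbit s z| == k]|.
Proof.
have -> : count_mem k (cycle_type s) = #|[set X in porbits s | #|X| == k]|.
  rewrite /cycle_type count_map cardE /enum_mem size_filter count_filter.
  by apply: eq_count => X; rewrite /= !inE andbC.
rewrite -sum_nat_const -[RHS]sum1_card (partition_big_imset (porbit s)) /=.
have -> : porbit s @: [set z | #|porbit s z| == k] = [set X in porbits s | #|X| == k].
  apply/setP=> X; rewrite [in RHS]inE.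
  apply/imsetP/andP=> [[z zk ->]|[/imsetP[z _ ->] zk]]; last by exists z; rewrite ?inE.
  by split; [exact: imset_f | move: zk; rewrite inE].
apply: eq_bigr => _ /setIdP[/imsetP[y _ ->] /eqP <-]; rewrite sum1_card.
apply: eq_card => z; rewrite [in RHS]unfold_in /= inE -eq_porbit_mem andbC.
by case: eqP => // ->; rewrite eqxx.
Qed.

Lemma has_type_count s (ty : seq nat) : 0%N \notin ty ->
  (forall k, count_mem k ty * k = #|[set z | #|porbit s z| == k]|)%N -> has_type s ty.
Proof.
move=> ty0 cnt; apply/allP=> -[|k] _; apply/eqP.
  by rewrite !(count_memPn _) ?cycle_type_neq0.
by apply/eqP; rewrite -(eqn_pmul2r (ltn0Sn k)) count_cycle_type cnt.
Qed.

Section Cycles23.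
Variables (s : 'S_n) (S2 S3 : {set 'I_n}).
Hypotheses (fix1 : {in ~: (S2 :|: S3), forall z, s z = z})
  (orb2 : {in S2, forall z, #|porbit s z| = 2}) (orb3 : {in S3, forall z, #|porbit s z| = 3}).

Let S23 : [disjoint S2 & S3].
Proof. by apply/pred0P=> z /=; apply/negbTE/andP=> -[/orb2 z2 /orb3]; rewrite z2. Qed.

Let card_porbitE z :
  #|porbit s z| = if z \in S2 then 2 else if z \in S3 then 3 else 1%N.
Proof.
case: ifPn => [/orb2 //|z2]; case: ifPn => [/orb3 //|z3].
by apply/card_porbit_fix/fix1; rewrite !inE negb_or z2 z3.
Qed.

Let porbits_card_eq k (A : {set 'I_n}) :
  (forall z, (if z \in S2 then 2 else if z \in S3 then 3 else 1%N) == k = (z \in A)) ->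
  #|[set z | #|porbit s z| == k]| = #|A|.
Proof. by move=> kA; apply: eq_card => z; rewrite inE card_porbitE kA. Qed.

Lemma has_type_cycles23 m2 m3 : #|S2| = (2 * m2)%N -> #|S3| = (3 * m3)%N ->
  has_type s (nseq (n - #|S2| - #|S3|) 1%N ++ nseq m2 2%N ++ nseq m3 3%N).
Proof.
move=> S2m S3m; apply: has_type_count; first by rewrite !mem_cat !mem_nseq /= !andbF.
move=> k; rewrite !count_cat !count_nseq.
have S3F z : z \in S2 -> z \in S3 = false by exact: disjointFr S23.
case: k => [|[|[|[|k]]]]; rewrite /= ?mul0n ?mul1n ?addn0 ?add0n ?muln0 ?muln1.
- by rewrite (@porbits_card_eq 0%N set0) ?cards0 // => z; rewrite inE; case: (z \in S2); case: (z \in S3).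
- rewrite (@porbits_card_eq 1%N (~: (S2 :|: S3))).
    by rewrite cardsCs setCK card_ord cardsU (disjoint_setI0 S23) cards0 subn0 subnDA.
  by move=> z; rewrite !inE negb_or; case: (z \in S2); case: (z \in S3).
- rewrite (@porbits_card_eq 2%N S2) ?S2m 1?mulnC // => z.
  by case: (z \in S2); case: (z \in S3).
- rewrite (@porbits_card_eq 3%N S3) ?S3m 1?mulnC // => z.
  by case: (boolP (z \in S2)) => [/S3F ->|] //; case: (z \in S3).
- by rewrite (@porbits_card_eq k.+4 set0) ?cards0 // => z; rewrite inE; case: (z \in S2); case: (z \in S3).
Qed.

End Cycles23.
End CycleType.

Section TpermCyc3.
Variables (n : nat) (a b d e f : 'I_n).
Hypotheses (ab : a != b) (def : uniq [:: d; e; f]).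
Hypotheses (a_def : a \notin [:: d; e; f]) (b_def : b \notin [:: d; e; f]).
Local Notation t := (tperm a b).
Local Notation c := (cyc3 d e f).

Let tc : commute t c.
Proof. exact: commute_tperm (cyc3_fix a_def) (cyc3_fix b_def). Qed.

Lemma connected_tperm_cyc3 : connected (cls t) (cls c).
Proof.
exact: connected_cls_mul23 tc (tperm_expg2 a b) (cyc3_expg3 def) (tperm_neq1 ab) (cyc3_neq1 def).
Qed.

Lemma adj_tperm_mul_cyc3 : adj (cls t) (cls (t * c)).
Proof.
exact: adj_cls_mul23_l tc (tperm_expg2 a b) (cyc3_expg3 def) (tperm_neq1 ab) (cyc3_neq1 def).
Qed.

Lemma has_type_tperm : has_type t (nseq (n - 2) 1%N ++ [:: 2%N]).
Proof.
have := @has_type_cycles23 n t [set a; b] set0 _ _ _ 1 0.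
rewrite cards2 ab cards0 subn0; apply=> //.
- by move=> z; rewrite !inE !negb_or andbT => /andP[za zb]; rewrite tpermD // eq_sym.
- exact: card_porbit2 ab (tpermL a b) (tpermR a b).
- by move=> z; rewrite inE.
Qed.

Lemma has_type_cyc3 : has_type c (nseq (n - 3) 1%N ++ [:: 3%N]).
Proof.
have := @has_type_cycles23 n c set0 [set d; e; f] _ _ _ 0 1.
rewrite cards0 (cards3 def) subn0; apply=> //.
- by move=> z; rewrite !inE /= -orbA => z_def; apply: cyc3_fix; rewrite !inE.
- by move=> z; rewrite inE.
- exact: card_porbit3 def (cyc3_x d e f) (cyc3_y def) (cyc3_z def).
Qed.

Lemma has_type_tperm_mul_cyc3 : has_type (t * c) (nseq (n - 5) 1%N ++ [:: 2%N; 3%N]).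
Proof.
have t_def w : w \in [:: d; e; f] -> t w = w.
  by move=> w_def; rewrite tpermD //; [apply: contraNneq _ a_def | apply: contraNneq _ b_def] => ->.
have := @has_type_cycles23 n (t * c) [set a; b] [set d; e; f] _ _ _ 1 1.
rewrite cards2 ab (cards3 def) -subnDA; apply=> //.
- move=> z; rewrite !inE !negb_or -!andbA => /and5P[za zb zd ze zf].
  by rewrite permM tpermD 1?eq_sym // cyc3_fix // !inE !negb_or zd ze zf.
- by apply: card_porbit2 ab _ _; rewrite permM ?tpermL ?tpermR cyc3_fix.
- apply: card_porbit3 def _ _ _; rewrite permM t_def ?inE ?eqxx ?orbT //.
  + exact: cyc3_x.
  + exact: cyc3_y.
  + exact: cyc3_z.
Qed.

End TpermCyc3.

Section Transpositions.
Variables (n : nat) (n6 : (6 <= n)%N).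

Lemma connected_tperm_common (a b c : 'I_n) : a != b -> a != c ->
  connected (cls (tperm a b)) (cls (tperm a c)).
Proof.
move=> ab ac; have [<-|bc] := eqVneq b c; first exact: rt_refl.
have abc3 : (#|[set a; b; c]| + 3 <= #|'I_n|)%N.
  by rewrite cards3 ?uniq3 ?ab ?ac ?bc // card_ord.
have [s [s3 uniq_s dis]] := exists_uniq_notin abc3.
case: s s3 uniq_s dis => [|d [|e [|f []]]] // _ def dis.
have out x : x \in [set a; b; c] -> x \notin [:: d; e; f] by move/(disjointFr dis)->.
have [a_def b_def c_def] :
    [/\ a \notin [:: d; e; f], b \notin [:: d; e; f] & c \notin [:: d; e; f]].
  by split; apply: out; rewrite !inE eqxx ?orbT.
apply: rt_trans (connected_tperm_cyc3 ab def a_def b_def) _.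
exact/connected_sym/(connected_tperm_cyc3 ac def a_def c_def).
Qed.

Lemma connected_transpositions (t1 t2 : 'S_n) : transposition t1 -> transposition t2 ->
  connected (cls t1) (cls t2).
Proof.
move=> [a [b [ab ->]]] [c [d [cd ->]]].
have [ac|ac] := eqVneq a c; first by subst c; exact: connected_tperm_common.
apply: rt_trans (connected_tperm_common ab ac) _.
by rewrite tpermC; apply: connected_tperm_common; rewrite // eq_sym.
Qed.

End Transpositions.

Theorem lemma7p4 (n : nat) (hn : (6 <= n)%N) :
  (forall t1 t2 : 'S_n, transposition t1 -> transposition t2 ->
     connected (cls t1) (cls t2)) /\
  (exists psi : 'S_n, has_type psi (nseq (n - 2) 1%N ++ [:: 2%N]) /\
     forall t : 'S_n, transposition t -> connected (cls t) (cls psi)) /\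
  (exists psi : 'S_n, has_type psi (nseq (n - 5) 1%N ++ [:: 2%N; 3%N]) /\
     forall t : 'S_n, transposition t -> connected (cls t) (cls psi)) /\
  (exists psi : 'S_n, has_type psi (nseq (n - 3) 1%N ++ [:: 3%N]) /\
     forall t : 'S_n, transposition t -> connected (cls t) (cls psi)).
Proof.
have n5 : (#|(set0 : {set 'I_n})| + 5 <= #|'I_n|)%N by rewrite cards0 card_ord ltnW.
have [s [s5 uniq_s _]] := exists_uniq_notin n5.
case: s s5 uniq_s => [|a [|b [|d [|e [|f []]]]]] // _.
rewrite /= inE negb_or => /andP[/andP[ab a_def] /andP[b_def def]].
have to_ab t : transposition t -> connected (cls t) (cls (tperm a b)).
  by move=> tt; apply: connected_transpositions => //; exists a, b.
split; first exact: connected_transpositions.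
split; first by exists (tperm a b); split; [exact: has_type_tperm | exact: to_ab].
split.
  exists (tperm a b * cyc3 d e f); split; first exact: has_type_tperm_mul_cyc3.
  by move=> t /to_ab tab; apply: rt_trans tab _; apply/rt_step/adj_tperm_mul_cyc3.
exists (cyc3 d e f); split; first exact: has_type_cyc3.
by move=> t /to_ab tab; apply: rt_trans tab _; apply: connected_tperm_cyc3.
Qed.
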